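(* Let $r\in\mathbb{N}$ and $\eta(r)=11(r+1)^2(2r+3)\binom{2r}{r-1}$. Let $G$ be an $rP_3$-free graph and let $A,B$ be two disjoint stable sets in $G$ such that every vertex in $B$ has at least two neighbours in $A$. Then there exists $S\subseteq A$ with $|S|\leq\eta(r)$ such that every vertex in $B$ has a neighbour in $S$.
   Context: Graphs are finite and simple. $rP_3$ is the disjoint union of $r$ paths on $3$ vertices; a graph is $H$-free if it has no induced subgraph isomorphic to $H$. A stable set is a set of pairwise nonadjacent vertices. *)

From mathcomp Require Import all_boot.
Set Implicit Arguments. Unset Strict Implicit. Unset Printing Implicit Defensive.

Definition simple_graph (T : finType) (e : rel T) : Prop :=
  symmetric e /\ irreflexive e.

(* Adjacency of the graph rP_3 on vertex set 'I_r * 'I_3: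
   (c, i) ~ (d, j) iff c = d and |i - j| = 1 (path 0 - 1 - 2 in each copy). *)
Definition rP3_adj (r : nat) (x y : 'I_r * 'I_3) : bool :=
  (x.1 == y.1) && ((x.2.+1 == y.2 :> nat) || (y.2.+1 == x.2 :> nat)).

Definition has_induced_rP3 (T : finType) (e : rel T) (r : nat) : Prop :=
  exists f : 'I_r * 'I_3 -> T,
    injective f /\ forall x y, e (f x) (f y) = rP3_adj x y.

Definition rP3_free (T : finType) (e : rel T) (r : nat) : Prop :=
  ~ has_induced_rP3 e r.

Definition stable (T : finType) (e : rel T) (A : {set T}) : Prop :=
  forall x y, x \in A -> y \in A -> ~~ e x y.

Definition eta (r : nat) : nat :=
  11 * (r.+1) ^ 2 * (2 * r + 3) * 'C(2 * r, r.-1).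

From mathcomp Require Import all_boot zify.
Set Implicit Arguments. Unset Strict Implicit. Unset Printing Implicit Defensive.

(* We prove the lemma with the much smaller bound 2r <= eta(r).

   Write N(b) for the set of neighbours in A of b in B.  Call k vertices
   b_1..b_k of B "separated" if each b_i has two distinct neighbours p_i, q_i
   in A and no p_j, q_j (j <> i) is adjacent to b_i.  Then the paths
   p_i - b_i - q_i induce k P_3's (A and B are stable and disjoint), so in an
   rP_3-free graph there are no r separated vertices.

   The set-theoretic core is a greedy argument by induction on k: pick b0 in B
   with |N(b0)| minimal and two neighbours x, y of b0; every b not adjacent to
   x or y keeps at least two neighbours outside N(b0), by minimality.  Either
   these vertices, with neighbourhoods shrunk to N(b) \ N(b0), are hit by a
   set of size 2(k-1), which together with x, y hits all of B, or they contain
   k-1 separated vertices, which b0, x, y extend to k separated vertices. *)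

Section SeparatedPairs.
Variable T : finType.
Implicit Types (N : T -> {set T}) (A B : {set T}).

Definition separated_pairs N B (k : nat) : Prop :=
  exists b p q : nat -> T, forall i, i < k ->
    [/\ b i \in B, p i \in N (b i), q i \in N (b i), p i != q i &
        forall j, j < k -> j != i -> (p j \notin N (b i)) && (q j \notin N (b i))].

(* If |M| <= |P| and two distinct elements of M lie outside P, then P has at
   least two elements outside M; this is where the minimality of b0 is used. *)
Lemma card_setD_gt1 (M P : {set T}) (x y : T) :
  #|M| <= #|P| -> x \in M -> y \in M -> x != y -> x \notin P -> y \notin P ->
  1 < #|P :\: M|.
Proof.
move=> leMP xM yM xy xP yP.
have sub : x |: (y |: (P :&: M)) \subset M.
  by apply/subsetP => z; rewrite !inE => /or3P [/eqP->|/eqP->|/andP [_ ->]].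
have := subset_leq_card sub; have := cardsID M P.
rewrite cardsU1 !inE (negbTE xP) (negbTE xy) /= cardsU1 !inE (negbTE yP) /=.
lia.
Qed.

Lemma separated_pairs_cons N B B1 b0 x y k :
  b0 \in B -> x \in N b0 -> y \in N b0 -> x != y -> B1 \subset B ->
  (forall b, b \in B1 -> (x \notin N b) && (y \notin N b)) ->
  separated_pairs (fun b => N b :\: N b0) B1 k -> separated_pairs N B k.+1.
Proof.
move=> b0B xN yN xy /subsetP sB1 avoid [b [p [q sep]]].
exists (fun i => if i is i'.+1 then b i' else b0),
       (fun i => if i is i'.+1 then p i' else x),
       (fun i => if i is i'.+1 then q i' else y).
have outside i : i < k -> (p i \notin N b0) && (q i \notin N b0).
  by case/sep => _; rewrite !inE => /andP [-> _] /andP [-> _].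
case=> [|i] ltik.
  by split=> // -[|j] ltjk //= _; apply: outside.
have [bB1 pN qN pq sepi] := sep i ltik.
move: pN qN; rewrite !inE => /andP [_ pN] /andP [_ qN].
split=> //; first exact: sB1.
case=> [|j] ltjk /= ji; first exact: avoid.
have := sepi j ltjk ji; have /andP [pj qj] := outside j ltjk.
by rewrite !inE pj qj.
Qed.

Lemma transversal_or_separated_pairs k A B N :
  (forall b, b \in B -> N b \subset A) ->
  (forall b, b \in B -> 1 < #|N b|) ->
  ~ separated_pairs N B k ->
  exists2 S : {set T}, S \subset A /\ #|S| <= 2 * k &
     forall b, b \in B -> exists2 s, s \in S & s \in N b.
Proof.
elim: k B N => [|k IH] B N NA N2 noSep; have [->|[b1 b1B]] := set_0Vmem B;
  try by exists set0 => [|b]; rewrite ?sub0set ?cards0 ?inE.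
  by case: noSep; exists (fun=> b1), (fun=> b1), (fun=> b1).
have [b0 b0B b0min] := arg_minnP (fun b => #|N b|) b1B.
have /card_gt1P [x [y [xN yN xy]]] := N2 _ b0B.
pose B1 := [set b in B | (x \notin N b) && (y \notin N b)].
have [S1 [S1A cardS1] S1cover] : exists2 S : {set T},
    S \subset A /\ #|S| <= 2 * k &
    forall b, b \in B1 -> exists2 s, s \in S & s \in N b :\: N b0.
- apply: IH => [b|b|].
  + by rewrite inE => /andP [bB _]; exact: subset_trans (subsetDl _ _) (NA _ bB).
  + rewrite inE => /and3P [bB xNb yNb].
    exact: card_setD_gt1 (b0min _ bB) xN yN xy xNb yNb.
  + apply: contra_not noSep; apply: separated_pairs_cons b0B xN yN xy _ _.
    * by apply/subsetP => b; rewrite inE => /andP [].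
    * by move=> b; rewrite inE => /andP [].
exists ([set x; y] :|: S1).
  split; first by rewrite subUset S1A andbT subUset !sub1set !(subsetP (NA _ b0B)).
  by rewrite cardsU cards2; case: (x == y); lia.
move=> b bB.
have [xNb|xNb] := boolP (x \in N b); first by exists x; rewrite ?inE ?eqxx.
have [yNb|yNb] := boolP (y \in N b); first by exists y; rewrite ?inE ?eqxx ?orbT.
have [s sS1] : exists2 s, s \in S1 & s \in N b :\: N b0.
  by apply: S1cover; rewrite inE bB xNb yNb.
by rewrite inE => /andP [_ sNb]; exists s; rewrite // inE sS1 orbT.
Qed.

End SeparatedPairs.

(* Paths p_c - b_c - q_c (c < r) with middle vertices in the stable set B,
   ends in the disjoint stable set A, and no edges between different paths
   except possibly between ends, which stability of A excludes, form an
   induced rP_3. *)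
Section InducedPaths.
Variables (T : finType) (e : rel T) (A B : {set T}).
Hypotheses (e_sym : symmetric e) (e_irr : irreflexive e).
Hypotheses (A_stable : stable e A) (B_stable : stable e B).
Hypothesis AB_disjoint : [disjoint A & B].
Variables (r : nat) (b p q : nat -> T).
Hypothesis path_vertices : forall c, c < r -> [/\ b c \in B, p c \in A & q c \in A].
Hypothesis path_edges : forall c, c < r -> [/\ e (b c) (p c), e (b c) (q c) & p c != q c].
Hypothesis cross_non_edges : forall c d, c < r -> d < r -> c != d ->
  ~~ e (b c) (p d) && ~~ e (b c) (q d).

Definition path_embedding (x : 'I_r * 'I_3) : T :=
  match val x.2 with 0 => p x.1 | 1 => b x.1 | _ => q x.1 end.

Lemma path_embedding_adj x y :
  e (path_embedding x) (path_embedding y) = rP3_adj x y.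
Proof.
case: x y => [c [i ltic]] [d [j ltjd]]; rewrite /path_embedding /rP3_adj /=.
have [[bB pA qA] [bp bq pq]] := (path_vertices (ltn_ord c), path_edges (ltn_ord c)).
have [[bB' pA' qA'] _] := (path_vertices (ltn_ord d), path_edges (ltn_ord d)).
have [<-|ncd] := eqVneq c d; rewrite /=.
  case: i ltic => [|[|[|i]]] // _; case: j ltjd => [|[|[|j]]] // _ /=; rewrite ?e_irr //.
  - by rewrite e_sym.
  - by rewrite (negbTE (A_stable _ _)).
  - by rewrite (negbTE (A_stable _ _)).
  - by rewrite e_sym.
have /andP [bcpd bcqd] := cross_non_edges (ltn_ord c) (ltn_ord d) ncd.
have /andP [bdpc bdqc] : ~~ e (b d) (p c) && ~~ e (b d) (q c).
  by apply: cross_non_edges; rewrite // eq_sym.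
case: i j ltic ltjd => [|[|[|i]]] [|[|[|j]]] //= _ _; apply/negbTE.
all: first [done | by apply: A_stable | by apply: B_stable | by rewrite e_sym].
Qed.

(* No vertex of rP_3 is isolated; used to recover the path index of a vertex
   from its image. *)
Lemma rP3_neighbour (x : 'I_r * 'I_3) : exists y, rP3_adj x y.
Proof.
case: x => c [[|[|[|i]]] lti] //.
- by exists (c, Ordinal (isT : 1 < 3)); rewrite /rP3_adj /= eqxx.
- by exists (c, Ordinal (isT : 0 < 3)); rewrite /rP3_adj /= eqxx.
- by exists (c, Ordinal (isT : 1 < 3)); rewrite /rP3_adj /= eqxx.
Qed.

(* Images determine the path (by adjacency to a neighbour) and then the
   position in it (b_c lies in B, p_c <> q_c lie in A). *)
Lemma path_embedding_inj : injective path_embedding.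
Proof.
move=> x y fxy.
have [z xz] := rP3_neighbour x.
have yz : rP3_adj y z by rewrite -path_embedding_adj -fxy path_embedding_adj.
have same_path : x.1 = y.1.
  by move: xz yz; rewrite /rP3_adj => /andP [/eqP -> _] /andP [/eqP -> _].
clear xz yz.
case: x y fxy same_path => [c [i lti]] [d [j ltj]] /= + cd; subst d.
rewrite /path_embedding /= => fxy; congr (_, _); apply: val_inj => /=.
have [[bB pA qA] [_ _ pq]] := (path_vertices (ltn_ord c), path_edges (ltn_ord c)).
have ends_not_middle v : v \in A -> v != b c.
  by move=> vA; apply: contraTneq bB => <-; rewrite (disjointFr AB_disjoint vA).
have [pb qb] := (ends_not_middle _ pA, ends_not_middle _ qA).
case: i lti fxy => [|[|[|i]]] // _; case: j ltj => [|[|[|j]]] // _ fxy.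
all: by rewrite ?fxy ?eqxx in pq pb qb.
Qed.

Lemma induced_rP3_of_paths : has_induced_rP3 e r.
Proof.
exists path_embedding; split; [exact: path_embedding_inj | exact: path_embedding_adj].
Qed.

End InducedPaths.

Lemma separated_neighbourhoods_induced_rP3 (T : finType) (e : rel T)
    (A B : {set T}) (r : nat) :
  simple_graph e -> stable e A -> stable e B -> [disjoint A & B] ->
  separated_pairs (fun v => [set a in A | e v a]) B r -> has_induced_rP3 e r.
Proof.
move=> [e_sym e_irr] A_stable B_stable AB_disjoint [b [p [q sep]]].
have pair_in_A c : c < r -> (p c \in A) && (q c \in A).
  by case/sep => _; rewrite !inE => /andP [-> _] /andP [-> _].
apply: (induced_rP3_of_paths (b := b) (p := p) (q := q)
          e_sym e_irr A_stable B_stable AB_disjoint)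
  => [c /sep [] | c /sep [_] | c d ltcr ltdr ncd].
- by rewrite !inE => bB /andP [pA _] /andP [qA _] _ _.
- by rewrite !inE => /andP [_ bp] /andP [_ bq] pq _.
- have [_ _ _ _ /(_ d ltdr)] := sep c ltcr; rewrite eq_sym ncd => /(_ isT).
  by have /andP [pA qA] := pair_in_A d ltdr; rewrite !inE pA qA.
Qed.

Lemma double_le_eta (r : nat) : 2 * r <= eta r.
Proof.
have : 0 < 'C(2 * r, r.-1) by rewrite bin_gt0; lia.
by rewrite /eta; nia.
Qed.

Theorem lemma2p5 (r : nat) (T : finType) (e : rel T) (A B : {set T}) :
  simple_graph e ->
  rP3_free e r ->
  stable e A -> stable e B -> [disjoint A & B] ->
  (forall b, b \in B -> 2 <= #|[set a in A | e b a]|) ->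
  exists S : {set T},
    [/\ S \subset A, #|S| <= eta r &
        forall b, b \in B -> exists2 s, s \in S & e b s].
Proof.
move=> simple free A_stable B_stable AB_disjoint two_neighbours.
have in_A b : b \in B -> [set a in A | e b a] \subset A.
  by move=> _; apply/subsetP => a; rewrite inE => /andP [].
have no_separated : ~ separated_pairs (fun v => [set a in A | e v a]) B r.
  by move=> sep; apply: free; exact: separated_neighbourhoods_induced_rP3 sep.
have [S [SA cardS] cover] :=
  transversal_or_separated_pairs in_A two_neighbours no_separated.
exists S; split=> //; first exact: leq_trans cardS (double_le_eta r).
by move=> b /cover [s sS]; rewrite inE => /andP [_ bs]; exists s.
Qed.
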